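(* Let $b,q$ be integers with $1\le q<b$. For $\ell\in[b-1]$ let $Q_\ell\in\mathbb F_2^{q\times b}$ have a single entry $1$ at position $(\ell\bmod q,\ q+(\ell\bmod(b-q)))$ and zeros elsewhere; let $Q_b=(I_q\mid \mathbf 0)\in\mathbb F_2^{q\times b}$; and let $Q_\ell=\mathbf 0$ for $b<\ell<b+q$. Then the $bq\times bq$ block matrix $(Q_{b+j-i})_{i\in[b],\,j\in[q]}$ (block row $i$, block column $j$) is invertible over $\mathbb F_2$. (In the paper this is applied with $b=b_2$ to the RD code, the blocks $Q_\ell$ being $P'_\ell$ with the bottom $T-b_1-q$ rows deleted, and with $b=b_1$, $q<b_1$, to the SR code, the blocks being $P_{(p-1)b_1+\ell}$ with the first $b_2$ rows, the last $(p-1)b_2$ rows and the last $b_2-b_1$ columns deleted.)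
   Context: Convention: $m\bmod n$ denotes the representative of $m$ modulo $n$ in $\{1,\dots,n\}$ (so it takes values $1,\dots,n$). *)

From mathcomp Require Import all_boot all_algebra.
Set Implicit Arguments. Unset Strict Implicit. Unset Printing Implicit Defensive.
Import GRing.Theory.
Local Open Scope ring_scope.

(* Paper's convention: m mod n takes values in {1,...,n}. *)
Definition modp1 (m n : nat) : nat := if (m %% n == 0)%N then n else (m %% n)%N.

(* Entry (r+1, c+1) (1-based; r, c are 0-based) of the q x b block Q_l over F_2.
   - 1 <= l <= b-1 : single 1 at (l mod q, q + (l mod (b-q)))   (1-based)
   - l = b         : (I_q | 0)
   - otherwise (b < l < b+q, the only other values used) : 0 *)
Definition Qent (b q l r c : nat) : 'F_2 :=
  if (1 <= l <= b.-1)%N then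
    ((r.+1 == modp1 l q) && (c.+1 == q + modp1 l (b - q))%N)%:R
  else if l == b then (r == c)%:R
  else 0.

Definition Qblock (b q l : nat) : 'M['F_2]_(q, b) := \matrix_(r < q, c < b) Qent b q l r c.

(* Global 0-based row R lies in block row
   R %/ q (0-based) at inner row R %% q; global column C lies in block column
   C %/ b at inner column C %% b.  (With 0-based block indices i', j',
   b + (j'+1) - (i'+1) = b + j' - i'.) *)
Definition bigQ (b q : nat) : 'M['F_2]_(b * q) :=
  \matrix_(R < b * q, C < b * q)
     Qent b q (b + C %/ b - R %/ q)%N (R %% q)%N (C %% b)%N.

From Pilot Require Import Defs.
From mathcomp Require Import all_boot all_algebra.
From mathcomp Require Import zify.
Import GRing.Theory.

(* Every row R has a pivot column whose other nonzero entries all lie in rows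
   treated earlier (the first q block rows come first), so the left kernel of
   the matrix is trivial.  In a block row i < q the identity part of Q_b gives
   a column whose only nonzero entry is in row R.  In a block row i >= q with
   inner row r, pick the block column j < q with b - i - 1 + j = r (mod q):
   the single 1 of Q_(b+j-i) then lies in row r and column
   q + ((b - i - 1 + j) mod (b - q)); as b - i - 1 takes only b - q values for
   i in [q, b), no other block row i' >= q meets this column, which leaves only
   rows of the first kind. *)

Lemma unitmx_of_pivots (F : fieldType) n (A : 'M[F]_n) (w : 'I_n -> nat) :
  (forall i, exists2 j, A i j != 0%R &
     forall i', i' != i -> A i' j != 0%R -> w i' < w i) ->
  A \in unitmx.
Proof.
move=> pivot; suff kerA0 (u : 'rV[F]_n) : (u *m A = 0 -> u = 0)%R.
  rewrite -row_free_unit -kermx_eq0; apply/eqP/row_matrixP => k.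
  by rewrite row0; apply: kerA0; rewrite -row_mul mulmx_ker row0.
move=> uA0; apply/rowP => i; rewrite mxE.
have [m] := ubnP (w i); elim: m i => // m IHm i /ltnSE w_i_le.
have [j Aij_neq0 below] := pivot i.
have /matrixP/(_ ord0 j) := uA0; rewrite !mxE (bigD1 i) //= big1 ?addr0.
  by move/eqP; rewrite mulf_eq0 (negPf Aij_neq0) orbF => /eqP.
move=> i' ne_i'i; have [->|/(below _ ne_i'i) lt_w] := eqVneq (A i' j) 0%R.
  by rewrite mulr0.
by rewrite IHm ?mul0r // (leq_trans lt_w).
Qed.

Lemma exists_addn_modn (a : nat) {q r : nat} :
  r < q -> exists2 j, j < q & (a + j) %% q = r.
Proof.
move=> lt_rq; have q_gt0 : 0 < q by apply: leq_ltn_trans lt_rq.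
exists ((r + (q - a %% q)) %% q); first exact: ltn_pmod.
have lt_aq := ltn_pmod a q_gt0.
rewrite modnDmr -modnDml.
have -> : a %% q + (r + (q - a %% q)) = r + q by lia.
by rewrite modnDr modn_small.
Qed.

Lemma ltn_block_index {m n i c : nat} : i < m -> c < n -> i * n + c < n * m.
Proof. by move=> lt_im lt_cn; rewrite mulnC; nia. Qed.

Lemma eq_ord_divmod n d (i i' : 'I_n) :
  i %/ d = i' %/ d -> i %% d = i' %% d -> i = i'.
Proof.
move=> eq_div eq_mod; apply: val_inj.
by rewrite /= (divn_eq i d) eq_div eq_mod -divn_eq.
Qed.

(* Qualified because polydiv exports a lemma named modp1. *)
Lemma modp1E l n : 0 < l -> 0 < n -> Defs.modp1 l n = (l.-1 %% n).+1.
Proof.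
case: l => // k _ n_gt0 /=; rewrite /Defs.modp1 modnS.
have lt_kn := ltn_pmod k n_gt0.
case: (boolP (n %| k.+1)) => //.
rewrite {1}(divn_eq k n) -addnS dvdn_addr ?dvdn_mull // => dvd_n.
by apply/eqP; rewrite eqn_leq lt_kn dvdn_leq.
Qed.

Section Blocks.

Context {b q : nat}.
Hypotheses (q_gt0 : 0 < q) (lt_qb : q < b).

Lemma Qent_diag r : Qent b q b r r = 1%R.
Proof.
rewrite /Qent eqxx; case: ifP => [/andP[b_gt0 le_b]|_]; last by rewrite eqxx.
by move: le_b; rewrite leqNgt ltn_predL b_gt0.
Qed.

Lemma Qent_single k :
  k.+1 < b -> Qent b q k.+1 (k %% q) (q + k %% (b - q)) = 1%R.
Proof.
move=> lt_k1b; have bq_gt0 : 0 < b - q by rewrite subn_gt0.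
by rewrite /Qent ltn_predRL lt_k1b /= !modp1E //= addnS !eqxx.
Qed.

Lemma Qent_neq0 l r c : Qent b q l r c != 0%R ->
  [/\ 0 < l < b, r = l.-1 %% q & c = q + l.-1 %% (b - q)] \/ l = b /\ r = c.
Proof.
have bq_gt0 : 0 < b - q by rewrite subn_gt0.
rewrite /Qent; have -> : (l <= b.-1) = (l < b) by lia.
case: ifP => [/andP[l_gt0 lt_lb]|_].
  rewrite !modp1E // addnS !eqSS.
  case: (r =P _) => [->|_]; last by rewrite eqxx.
  case: (c =P _) => [->|_]; last by rewrite eqxx.
  by move=> _; left; split => //; apply/andP.
case: (l =P b) => [->|_]; last by rewrite eqxx.
by case: (r =P c) => [->|_]; [right | rewrite eqxx].
Qed.

Lemma block_row_lt (R : 'I_(b * q)) : R %/ q < b.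
Proof. by rewrite ltn_divLR. Qed.

Lemma bigQE (R : 'I_(b * q)) j c (lt_C : j * b + c < b * q) : c < b ->
  bigQ b q R (Ordinal lt_C) = Qent b q (b + j - R %/ q) (R %% q) c.
Proof.
move=> lt_cb; have b_gt0 : 0 < b by apply: leq_ltn_trans lt_qb.
rewrite mxE /= divnMDl // (divn_small lt_cb) addn0.
by rewrite modnMDl (modn_small lt_cb).
Qed.

Lemma bigQ_pivot_top (R : 'I_(b * q)) : R %/ q < q ->
  exists2 C, bigQ b q R C != 0%R &
    forall R' : 'I_(b * q), bigQ b q R' C != 0%R -> R' = R.
Proof.
move=> top; have lt_rq := ltn_pmod R q_gt0.
have lt_rb : R %% q < b := ltn_trans lt_rq lt_qb.
exists (Ordinal (ltn_block_index top lt_rb)).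
  by rewrite bigQE // addnK Qent_diag oner_neq0.
move=> R'; rewrite bigQE // => /Qent_neq0 [[_ _ /eqP]|[eq_l eq_r]].
  by lia.
apply: (@eq_ord_divmod _ q) => //; have := block_row_lt R'; lia.
Qed.

Lemma bigQ_pivot_bottom (R : 'I_(b * q)) : q <= R %/ q ->
  exists2 C, bigQ b q R C != 0%R &
    forall R' : 'I_(b * q), q <= R' %/ q -> bigQ b q R' C != 0%R -> R' = R.
Proof.
move=> bottom; have lt_Rb := block_row_lt R; set s := b - (R %/ q).+1.
have bq_gt0 : 0 < b - q by rewrite subn_gt0.
have lt_sbq : s < b - q by lia.
have [j lt_jq mod_sj] := exists_addn_modn s (ltn_pmod R q_gt0).
have lt_sjb : (s + j).+1 < b by lia.
have lt_cb : q + (s + j) %% (b - q) < b by rewrite -ltn_subRL ltn_pmod.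
exists (Ordinal (ltn_block_index lt_jq lt_cb)).
  have eq_l : b + j - R %/ q = (s + j).+1 by lia.
  by rewrite bigQE // eq_l -mod_sj Qent_single // oner_neq0.
move=> R' bottom'; have lt_R'b := block_row_lt R'; set s' := b - (R' %/ q).+1.
have lt_s'bq : s' < b - q by lia.
have eq_l' : (b + j - R' %/ q).-1 = s' + j by lia.
have eq_div : s' = s -> R' %/ q = R %/ q by lia.
rewrite bigQE // => /Qent_neq0 [[_ eq_r eq_c]|[eq_l _]]; last by lia.
have eq_s : s' = s.
  move/eqP: eq_c; rewrite eq_l' eqn_add2l [s' + j]addnC [s + j]addnC eqn_modDl.
  by rewrite !modn_small // => /eqP.
apply: (@eq_ord_divmod _ q); first exact: eq_div.
by rewrite eq_r eq_l' eq_s mod_sj.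
Qed.

End Blocks.

Theorem mainTheorem10 (b q : nat) (hq1 : (1 <= q)%N) (hqb : (q < b)%N) :
  bigQ b q \in unitmx.
Proof.
apply: (@unitmx_of_pivots _ _ _ (fun R => q <= R %/ q)) => R.
have [top|bottom] := ltnP (R %/ q) q.
  have [C nz_RC unique_R] := bigQ_pivot_top hq1 hqb R top.
  by exists C => // R' ne_R'R /unique_R eq_R'R; rewrite eq_R'R eqxx in ne_R'R.
have [C nz_RC unique_R] := bigQ_pivot_bottom hq1 hqb R bottom.
exists C => // R' ne_R'R nz_R'C /=; rewrite ltnNge lt0b.
by apply: contra ne_R'R => bottom'; rewrite (unique_R R').
Qed.
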